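(* If $\otimes=\min$ and $\oplus$ is any uninorm on $[0,1]$, then $(\otimes,\oplus)$ satisfies the rearrangement inequality and the dual rearrangement inequality. If $\oplus=\max$ and $\otimes$ is any uninorm on $[0,1]$, then $(\otimes,\oplus)$ satisfies the rearrangement inequality and the dual rearrangement inequality.
   Context: A uninorm is a function $\otimes:[0,1]^2\to[0,1]$ that is commutative, associative, monotonic ($x\leq y$ implies $x\otimes z\leq y\otimes z$), and has an identity element $e\in[0,1]$ ($\min$ and $\max$ are uninorms). $(\otimes,\oplus)$ satisfies the rearrangement inequality if for every $n\geq1$, all $0\leq x_1\leq\cdots\leq x_n\leq 1$, $0\leq y_1\leq\cdots\leq y_n\leq 1$ and every permutation $\sigma$ of $\{1,\dots,n\}$, $$(x_n\otimes y_1)\oplus\cdots\oplus(x_1\otimes y_n)\leq (x_{\sigma(1)}\otimes y_1)\oplus\cdots\oplus(x_{\sigma(n)}\otimes y_n)\leq (x_1\otimes y_1)\oplus\cdots\oplus(x_n\otimes y_n),$$ and the dual rearrangement inequality if for all such data $$(x_n\oplus y_1)\otimes\cdots\otimes(x_1\oplus y_n)\geq (x_{\sigma(1)}\oplus y_1)\otimes\cdots\otimes(x_{\sigma(n)}\oplus y_n)\geq (x_1\oplus y_1)\otimes\cdots\otimes(x_n\oplus y_n).$$ *)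

From Stdlib Require Import Reals.
Open Scope R_scope.

Definition I01 (x : R) : Prop := 0 <= x <= 1.

Definition uninorm (u : R -> R -> R) : Prop :=
  (forall x y, I01 x -> I01 y -> I01 (u x y)) /\
  (forall x y, I01 x -> I01 y -> u x y = u y x) /\
  (forall x y z, I01 x -> I01 y -> I01 z -> u x (u y z) = u (u x y) z) /\
  (forall x y z, I01 x -> I01 y -> I01 z -> x <= y -> u x z <= u y z) /\
  (exists e, I01 e /\ forall x, I01 x -> u e x = x).

(* Iterated operation over the terms f 0, ..., f (n-1), n >= 1:
   iter_op op f n = (...((f 0 op f 1) op f 2) ...) op f (n-1).
   For n = 0 the value is f 0 (never used: the statement requires n >= 1). *)
Fixpoint iter_op_aux (op : R -> R -> R) (f : nat -> R) (k : nat) : R :=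
  match k with
  | O => f O
  | S k' => op (iter_op_aux op f k') (f k)
  end.

Definition iter_op (op : R -> R -> R) (f : nat -> R) (n : nat) : R :=
  iter_op_aux op f (pred n).

(* sigma is a permutation of {0, ..., n-1} (indices shifted by one
   compared with the paper's {1, ..., n}). *)
Definition is_perm (n : nat) (sigma : nat -> nat) : Prop :=
  (forall i, (i < n)%nat -> (sigma i < n)%nat) /\
  (forall i j, (i < n)%nat -> (j < n)%nat -> sigma i = sigma j -> i = j).

Definition sorted01 (n : nat) (x : nat -> R) : Prop :=
  (forall i, (i < n)%nat -> I01 (x i)) /\
  (forall i j, (i <= j)%nat -> (j < n)%nat -> x i <= x j).

Definition rearrangement (otimes oplus : R -> R -> R) : Prop :=
  forall (n : nat) (x y : nat -> R) (sigma : nat -> nat),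
    (1 <= n)%nat -> sorted01 n x -> sorted01 n y -> is_perm n sigma ->
    iter_op oplus (fun i => otimes (x (n - 1 - i)%nat) (y i)) n
      <= iter_op oplus (fun i => otimes (x (sigma i)) (y i)) n /\
    iter_op oplus (fun i => otimes (x (sigma i)) (y i)) n
      <= iter_op oplus (fun i => otimes (x i) (y i)) n.

Definition dual_rearrangement (otimes oplus : R -> R -> R) : Prop :=
  forall (n : nat) (x y : nat -> R) (sigma : nat -> nat),
    (1 <= n)%nat -> sorted01 n x -> sorted01 n y -> is_perm n sigma ->
    iter_op otimes (fun i => oplus (x (n - 1 - i)%nat) (y i)) n
      >= iter_op otimes (fun i => oplus (x (sigma i)) (y i)) n /\
    iter_op otimes (fun i => oplus (x (sigma i)) (y i)) n
      >= iter_op otimes (fun i => oplus (x i) (y i)) n.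

From Stdlib Require Import Reals Lra Lia FinFun.
Open Scope R_scope.

(* The outer operation is in every case a uninorm (min and max are uninorms
   with neutral elements 1 and 0), hence commutative, associative and
   monotone.  So exchanging the x-values of two positions changes the
   aggregate exactly as it changes the aggregate of those two terms, and the
   n-term inequalities follow from the two-term ones by moving, one
   transposition at a time, the largest (resp. smallest) x-value next to the
   largest y-value and inducting on n.  For the two-term inequalities write
   U p q = U (min p q) (max p q): when ⊗ = min, the sorted pairing
   {a ∧ c, b ∧ d} has the same minimum as the crossed pairing {b ∧ c, a ∧ d}
   and a larger maximum, and dually when ⊕ = max; when the outer operation
   is min (resp. max), the sorted pairing contains the smallest term a ⊕ c
   (resp. the largest term b ⊗ d). *)

Definition transp (k j i : nat) : nat :=
  if Nat.eqb i k then j else if Nat.eqb i j then k else i.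

Ltac transp_cases :=
  unfold transp;
  repeat match goal with |- context [Nat.eqb ?a ?b] =>
    is_var a; destruct (Nat.eqb_spec a b); cbn end.

Lemma transp_l k j : transp k j k = j.
Proof. transp_cases; lia. Qed.

Lemma transp_r k j : transp k j j = k.
Proof. transp_cases; lia. Qed.

Lemma transp_other k j i : i <> k -> i <> j -> transp k j i = i.
Proof. transp_cases; lia. Qed.

Lemma transp_involutive k j i : transp k j (transp k j i) = i.
Proof. transp_cases; transp_cases; lia. Qed.

Lemma transp_bound n k j i : (k < n)%nat -> (j < n)%nat -> (i < n)%nat -> (transp k j i < n)%nat.
Proof. unfold transp. now destruct Nat.eqb, Nat.eqb. Qed.

Lemma is_perm_surj n s :
  is_perm n s -> forall j, (j < n)%nat -> exists k, (k < n)%nat /\ s k = j.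
Proof. intros [Hb Hi]. now apply bInjective_bSurjective. Qed.

Lemma is_perm_1 s : is_perm 1 s -> s 0%nat = 0%nat.
Proof. intros [Hb _]. specialize (Hb 0%nat). lia. Qed.

Lemma is_perm_transp n s k j :
  is_perm n s -> (k < n)%nat -> (j < n)%nat -> is_perm n (fun i => s (transp k j i)).
Proof.
  intros [Hb Hi] Hk Hj. split.
  - intros i Hin. now apply Hb, transp_bound.
  - intros i i' Hin Hi'n E.
    rewrite <- (transp_involutive k j i), <- (transp_involutive k j i').
    f_equal. apply Hi; auto using transp_bound.
Qed.

Lemma is_perm_restrict n s : is_perm (S n) s -> s n = n -> is_perm n s.
Proof.
  intros [Hb Hi] Hsn. split.
  - intros i Hin.
    assert (s i <> n) by (intros E; assert (i = n) by (apply Hi; lia); lia).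
    specialize (Hb i). lia.
  - intros i j Hin Hjn. apply Hi; lia.
Qed.

Lemma is_perm_shift n s : is_perm (S n) s -> s n = 0%nat -> is_perm n (fun i => (s i - 1)%nat).
Proof.
  intros [Hb Hi] Hsn.
  assert (Hpos : forall i, (i < n)%nat -> (1 <= s i <= n)%nat).
  { intros i Hin. assert (s i <> 0%nat) by (intros E; assert (i = n) by (apply Hi; lia); lia).
    specialize (Hb i). lia. }
  split.
  - intros i Hin. specialize (Hpos i Hin). lia.
  - intros i j Hin Hjn E. apply Hi; [lia | lia |].
    pose proof (Hpos i Hin). pose proof (Hpos j Hjn). lia.
Qed.

Lemma sorted01_le n m x : (m <= n)%nat -> sorted01 n x -> sorted01 m x.
Proof. intros Hmn [H01 Hle]. split; intros; [apply H01 | apply Hle]; lia. Qed.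

Lemma sorted01_shift n x : sorted01 (S n) x -> sorted01 n (fun i => x (S i)).
Proof. intros [H01 Hle]. split; intros; [apply H01 | apply Hle]; lia. Qed.

Lemma iter_op_aux_ext op f f' m :
  (forall i, (i <= m)%nat -> f i = f' i) -> iter_op_aux op f m = iter_op_aux op f' m.
Proof.
  induction m as [|m IH]; intros E; simpl.
  - apply E; lia.
  - rewrite IH, E; auto.
Qed.

Definition set_at (f : nat -> R) (k : nat) (v : R) : nat -> R :=
  fun i => if Nat.eqb i k then v else f i.

Ltac minmax_lra := unfold I01, Rmin, Rmax in *; repeat destruct Rle_dec; lra.

Definition rearrangement2 (rel : R -> R -> Prop) (otimes oplus : R -> R -> R) : Prop :=
  forall a b c d, I01 a -> I01 b -> I01 c -> I01 d -> a <= b -> c <= d ->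
    rel (oplus (otimes b c) (otimes a d)) (oplus (otimes a c) (otimes b d)).

Lemma uninorm_Rmin : uninorm Rmin.
Proof. repeat split; intros; try exists 1; repeat split; intros; minmax_lra. Qed.

Lemma uninorm_Rmax : uninorm Rmax.
Proof. repeat split; intros; try exists 0; repeat split; intros; minmax_lra. Qed.

Section Uninorm.

Variable U : R -> R -> R.
Hypothesis U_uninorm : uninorm U.

Lemma uninorm_I01 x y : I01 x -> I01 y -> I01 (U x y).
Proof. apply U_uninorm. Qed.

Lemma uninorm_comm x y : I01 x -> I01 y -> U x y = U y x.
Proof. apply U_uninorm. Qed.

Lemma uninorm_assoc x y z : I01 x -> I01 y -> I01 z -> U x (U y z) = U (U x y) z.
Proof. apply U_uninorm. Qed.

Lemma uninorm_neutral : exists e, I01 e /\ forall x, I01 x -> U e x = x.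
Proof. apply U_uninorm. Qed.

Lemma uninorm_mono_l x y z : I01 x -> I01 y -> I01 z -> x <= y -> U x z <= U y z.
Proof. apply U_uninorm. Qed.

Lemma uninorm_mono_r x y z : I01 x -> I01 y -> I01 z -> y <= z -> U x y <= U x z.
Proof.
  intros Hx Hy Hz Hyz.
  rewrite (uninorm_comm x y), (uninorm_comm x z) by assumption.
  now apply uninorm_mono_l.
Qed.

Lemma uninorm_min_max x y : I01 x -> I01 y -> U x y = U (Rmin x y) (Rmax x y).
Proof.
  intros Hx Hy. unfold Rmin, Rmax.
  destruct (Rle_dec x y); [reflexivity | now apply uninorm_comm].
Qed.

Lemma rearrangement2_uninorm_min : rearrangement2 Rle Rmin U.
Proof.
  intros a b c d Ha Hb Hc Hd Hab Hcd.
  rewrite (uninorm_min_max (Rmin b c)) by minmax_lra.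
  replace (Rmin (Rmin b c) (Rmin a d)) with (Rmin a c) by minmax_lra.
  apply uninorm_mono_r; minmax_lra.
Qed.

Lemma rearrangement2_uninorm_max : rearrangement2 Rge Rmax U.
Proof.
  intros a b c d Ha Hb Hc Hd Hab Hcd.
  rewrite (uninorm_min_max (Rmax b c)) by minmax_lra.
  replace (Rmax (Rmax b c) (Rmax a d)) with (Rmax b d) by minmax_lra.
  apply Rle_ge, uninorm_mono_l; minmax_lra.
Qed.

Lemma rearrangement2_min_uninorm : rearrangement2 Rge U Rmin.
Proof.
  intros a b c d Ha Hb Hc Hd Hab Hcd.
  assert (U a c <= U b c) by now apply uninorm_mono_l.
  assert (U a c <= U a d) by now apply uninorm_mono_r.
  minmax_lra.
Qed.

Lemma rearrangement2_max_uninorm : rearrangement2 Rle U Rmax.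
Proof.
  intros a b c d Ha Hb Hc Hd Hab Hcd.
  assert (U b c <= U b d) by now apply uninorm_mono_r.
  assert (U a d <= U b d) by now apply uninorm_mono_l.
  minmax_lra.
Qed.

Lemma iter_op_aux_I01 f m :
  (forall i, (i <= m)%nat -> I01 (f i)) -> I01 (iter_op_aux U f m).
Proof.
  induction m as [|m IH]; intros Hf; simpl.
  - apply Hf; lia.
  - apply uninorm_I01; auto.
Qed.

Lemma iter_op_aux_pick e f k m :
  I01 e -> (forall x, I01 x -> U e x = x) ->
  (forall i, (i <= m)%nat -> I01 (f i)) -> (k <= m)%nat ->
  iter_op_aux U f m = U (f k) (iter_op_aux U (set_at f k e) m).
Proof.
  intros He Hneutral.
  induction m as [|m IH]; intros Hf Hk; cbn [iter_op_aux].
  - replace k with 0%nat by lia. unfold set_at. cbn.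
    rewrite uninorm_comm by auto. symmetry. apply Hneutral, Hf. lia.
  - assert (Hf' : forall i, (i <= m)%nat -> I01 (f i)) by (intros; apply Hf; lia).
    assert (Hfk : I01 (f k)) by (apply Hf; lia).
    assert (Hset : forall i, (i <= m)%nat -> I01 (set_at f k e i))
      by (intros i Hi; unfold set_at; destruct Nat.eqb; auto).
    destruct (Nat.eq_dec k (S m)) as [-> | Hkm].
    + rewrite (iter_op_aux_ext _ (set_at f (S m) e) f m)
        by (intros i Hi; unfold set_at; destruct (Nat.eqb_spec i (S m)); [lia | reflexivity]).
      unfold set_at. rewrite Nat.eqb_refl.
      rewrite (uninorm_comm _ e), Hneutral by auto using iter_op_aux_I01.
      apply uninorm_comm; auto using iter_op_aux_I01.
    + unfold set_at at 2. destruct (Nat.eqb_spec (S m) k); [lia |].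
      rewrite IH, uninorm_assoc by (auto using iter_op_aux_I01; lia).
      reflexivity.
Qed.

Lemma iter_op_aux_pair e f k m :
  I01 e -> (forall x, I01 x -> U e x = x) ->
  (forall i, (i <= S m)%nat -> I01 (f i)) -> (k <= m)%nat ->
  iter_op_aux U f (S m) = U (U (f k) (f (S m))) (iter_op_aux U (set_at f k e) m).
Proof.
  intros He Hneutral Hf Hk. cbn [iter_op_aux].
  assert (Hrest : I01 (iter_op_aux U (set_at f k e) m)).
  { apply iter_op_aux_I01. intros i Hi. unfold set_at. destruct Nat.eqb; auto. }
  rewrite (iter_op_aux_pick e f k m) by (auto; intros i Hi; apply Hf; lia).
  rewrite <- uninorm_assoc, (uninorm_comm _ (f (S m))), uninorm_assoc;
    auto using uninorm_I01.
Qed.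

Variable g : R -> R -> R.
Hypothesis g_I01 : forall a c, I01 a -> I01 c -> I01 (g a c).

Variable rel : R -> R -> Prop.
Hypothesis rel_refl : forall a, rel a a.
Hypothesis rel_trans : forall a b c, rel a b -> rel b c -> rel a c.
Hypothesis rel_U_l : forall a b c, I01 a -> I01 b -> I01 c -> rel a b -> rel (U a c) (U b c).
Hypothesis g_rearrangement2 : rearrangement2 rel g U.

Lemma iter_op_aux_exchange f1 f2 k m :
  (k <= m)%nat ->
  (forall i, (i <= S m)%nat -> I01 (f1 i) /\ I01 (f2 i)) ->
  (forall i, (i <= m)%nat -> i <> k -> f1 i = f2 i) ->
  rel (U (f1 k) (f1 (S m))) (U (f2 k) (f2 (S m))) ->
  rel (iter_op_aux U f1 (S m)) (iter_op_aux U f2 (S m)).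
Proof.
  intros Hk H01 Hagree Hpair.
  destruct uninorm_neutral as (e & He & Hneutral).
  rewrite (iter_op_aux_pair e f1 k m), (iter_op_aux_pair e f2 k m)
    by (auto; intros i Hi; apply H01, Hi).
  rewrite (iter_op_aux_ext _ (set_at f2 k e) (set_at f1 k e)).
  2:{ intros i Hi. unfold set_at. destruct (Nat.eqb_spec i k); auto.
      symmetry. auto. }
  destruct (H01 k), (H01 (S m)); try lia.
  apply rel_U_l; auto using uninorm_I01.
  apply iter_op_aux_I01. intros i Hi. unfold set_at.
  destruct Nat.eqb; [assumption | apply H01; lia].
Qed.

Lemma arrangement_I01 n x y i j :
  sorted01 n x -> sorted01 n y -> (j < n)%nat -> (i < n)%nat -> I01 (g (x j) (y i)).
Proof. intros [Hx _] [Hy _] Hj Hi. auto. Qed.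

Lemma iter_arrangement_I01 n m x y t :
  sorted01 n x -> sorted01 n y -> (m < n)%nat -> (forall i, (i <= m)%nat -> (t i < n)%nat) ->
  I01 (iter_op_aux U (fun i => g (x (t i)) (y i)) m).
Proof.
  intros Hx Hy Hm Ht. apply iter_op_aux_I01. intros i Hi.
  apply (arrangement_I01 n); auto. lia.
Qed.

Lemma iter_arrangement_transp n x y s k :
  sorted01 (S n) x -> sorted01 (S n) y -> is_perm (S n) s -> (k <= n)%nat ->
  x (s n) <= x (s k) ->
  rel (iter_op_aux U (fun i => g (x (s i)) (y i)) n)
     (iter_op_aux U (fun i => g (x (s (transp k n i))) (y i)) n).
Proof.
  intros Hx Hy [Hsb _] Hk Hxs.
  destruct (Nat.eq_dec k n) as [-> | Hkn].
  { rewrite (iter_op_aux_ext _ (fun i => g (x (s (transp n n i))) (y i))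
              (fun i => g (x (s i)) (y i)))
      by (intros i _; now transp_cases; subst).
    apply rel_refl. }
  destruct n as [|m]; [lia |].
  apply iter_op_aux_exchange with k; [lia | | |].
  - intros i Hi. split; apply (arrangement_I01 (S (S m))); auto; try lia;
      apply Hsb; [lia | apply transp_bound; lia].
  - intros i Hi Hik. now rewrite transp_other by lia.
  - rewrite transp_l, transp_r.
    destruct Hx as [Hx01 _], Hy as [Hy01 Hyle].
    apply g_rearrangement2; try apply Hx01, Hsb; try apply Hy01; try apply Hyle; auto; lia.
Qed.

Lemma iter_arrangement_rel_sorted m x y s :
  sorted01 (S m) x -> sorted01 (S m) y -> is_perm (S m) s ->
  rel (iter_op_aux U (fun i => g (x (s i)) (y i)) m)
     (iter_op_aux U (fun i => g (x i) (y i)) m).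
Proof.
  revert x y s. induction m as [|m IH]; intros x y s Hx Hy Hs.
  { cbn. rewrite is_perm_1 by assumption. apply rel_refl. }
  destruct (is_perm_surj _ _ Hs (S m)) as (k & Hk & Hsk); [lia |].
  set (s' := fun i => s (transp k (S m) i)).
  assert (Hs' : is_perm (S (S m)) s') by (apply is_perm_transp; auto; lia).
  assert (Hs'm : s' (S m) = S m) by (unfold s'; now rewrite transp_r).
  apply rel_trans with (iter_op_aux U (fun i => g (x (s' i)) (y i)) (S m)).
  - apply iter_arrangement_transp; auto; [lia |].
    rewrite Hsk. destruct Hx as [_ Hxle]. destruct Hs as [Hsb _].
    apply Hxle; [specialize (Hsb (S m)) | ]; lia.
  - cbn [iter_op_aux]. rewrite Hs'm.
    apply rel_U_l.
    + apply (iter_arrangement_I01 (S (S m))); auto. intros i Hi. apply Hs'. lia.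
    + apply (iter_arrangement_I01 (S (S m))); auto. intros; lia.
    + apply (arrangement_I01 (S (S m))); auto.
    + apply IH; eauto using sorted01_le, is_perm_restrict.
Qed.

Lemma iter_antisorted_rel_arrangement m x y s :
  sorted01 (S m) x -> sorted01 (S m) y -> is_perm (S m) s ->
  rel (iter_op_aux U (fun i => g (x (m - i)%nat) (y i)) m)
     (iter_op_aux U (fun i => g (x (s i)) (y i)) m).
Proof.
  revert x y s. induction m as [|m IH]; intros x y s Hx Hy Hs.
  { cbn. rewrite is_perm_1 by assumption. apply rel_refl. }
  destruct (is_perm_surj _ _ Hs 0) as (k & Hk & Hsk); [lia |].
  set (s' := fun i => s (transp k (S m) i)).
  assert (Hs' : is_perm (S (S m)) s') by (apply is_perm_transp; auto; lia).
  assert (Hs'm : s' (S m) = 0%nat) by (unfold s'; now rewrite transp_r).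
  apply rel_trans with (iter_op_aux U (fun i => g (x (s' i)) (y i)) (S m)).
  - cbn [iter_op_aux]. rewrite Hs'm, Nat.sub_diag.
    set (x' := fun i => x (S i)).
    set (s'' := fun i => (s' i - 1)%nat).
    assert (Hx' : sorted01 (S m) x') by now apply sorted01_shift.
    assert (Hy' : sorted01 (S m) y) by (apply sorted01_le with (S (S m)); auto).
    assert (Hpos : forall i, (i <= m)%nat -> s' i <> 0%nat).
    { intros i Hi E. destruct Hs' as [_ Hinj].
      assert (i = S m) by (apply Hinj; lia). lia. }
    rewrite (iter_op_aux_ext _ (fun i => g (x (S m - i)%nat) (y i))
               (fun i => g (x' (m - i)%nat) (y i)))
      by (intros i Hi; unfold x'; do 2 f_equal; lia).
    rewrite (iter_op_aux_ext _ (fun i => g (x (s' i)) (y i))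
               (fun i => g (x' (s'' i)) (y i)))
      by (intros i Hi; unfold x', s''; specialize (Hpos i Hi); do 2 f_equal; lia).
    apply rel_U_l.
    + apply (iter_arrangement_I01 (S m)); auto. intros; lia.
    + apply (iter_arrangement_I01 (S m)); auto.
      intros i Hi. destruct Hs' as [Hsb _]. specialize (Hsb i). unfold s''. lia.
    + apply (arrangement_I01 (S (S m))); auto; lia.
    + apply IH; auto. now apply is_perm_shift.
  - rewrite (iter_op_aux_ext _ (fun i => g (x (s i)) (y i))
               (fun i => g (x (s' (transp k (S m) i))) (y i)))
      by (intros i _; unfold s'; now rewrite transp_involutive).
    apply iter_arrangement_transp; auto; [lia |].
    rewrite Hs'm. unfold s'. rewrite transp_l.
    destruct Hx as [_ Hxle]. destruct Hs as [Hsb _].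
    apply Hxle; [| specialize (Hsb (S m))]; lia.
Qed.

Lemma rearrangement_rel_of_rearrangement2 n x y s :
  (1 <= n)%nat -> sorted01 n x -> sorted01 n y -> is_perm n s ->
  rel (iter_op U (fun i => g (x (n - 1 - i)%nat) (y i)) n)
     (iter_op U (fun i => g (x (s i)) (y i)) n) /\
  rel (iter_op U (fun i => g (x (s i)) (y i)) n)
     (iter_op U (fun i => g (x i) (y i)) n).
Proof.
  intros Hn Hx Hy Hs. destruct n as [|m]; [lia |]. unfold iter_op. cbn [pred].
  rewrite (iter_op_aux_ext _ (fun i => g (x (S m - 1 - i)%nat) (y i))
             (fun i => g (x (m - i)%nat) (y i)))
    by (intros; do 2 f_equal; lia).
  split.
  - now apply iter_antisorted_rel_arrangement.
  - now apply iter_arrangement_rel_sorted.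
Qed.

End Uninorm.

Lemma rearrangement_of_rearrangement2 otimes oplus :
  uninorm oplus -> (forall a c, I01 a -> I01 c -> I01 (otimes a c)) ->
  rearrangement2 Rle otimes oplus -> rearrangement otimes oplus.
Proof.
  intros Hoplus Hotimes H2 n x y s.
  apply rearrangement_rel_of_rearrangement2; auto using Rle_refl.
  - intros a b c. apply Rle_trans.
  - now apply uninorm_mono_l.
Qed.

Lemma dual_rearrangement_of_rearrangement2 otimes oplus :
  uninorm otimes -> (forall a c, I01 a -> I01 c -> I01 (oplus a c)) ->
  rearrangement2 Rge oplus otimes -> dual_rearrangement otimes oplus.
Proof.
  intros Hotimes Hoplus H2 n x y s.
  apply rearrangement_rel_of_rearrangement2; auto using Rge_refl.
  - intros a b c. apply Rge_trans.
  - intros a b c Ha Hb Hc Hab. apply Rle_ge, uninorm_mono_l, Rge_le; auto.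
Qed.

Theorem theorem10 :
  (forall oplus : R -> R -> R, uninorm oplus ->
     rearrangement Rmin oplus /\ dual_rearrangement Rmin oplus) /\
  (forall otimes : R -> R -> R, uninorm otimes ->
     rearrangement otimes Rmax /\ dual_rearrangement otimes Rmax).
Proof.
  split; intros U HU; split.
  - apply rearrangement_of_rearrangement2; auto using rearrangement2_uninorm_min.
    exact (uninorm_I01 _ uninorm_Rmin).
  - apply dual_rearrangement_of_rearrangement2;
      auto using uninorm_Rmin, uninorm_I01, rearrangement2_min_uninorm.
  - apply rearrangement_of_rearrangement2;
      auto using uninorm_Rmax, uninorm_I01, rearrangement2_max_uninorm.
  - apply dual_rearrangement_of_rearrangement2; auto using rearrangement2_uninorm_max.
    exact (uninorm_I01 _ uninorm_Rmax).
Qed.
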